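(* Let $H$ be a Heyting algebra, $f:H\to H$ a strong monotone function and $a\in H$. If $f$ has a least fixed point $\mu.f$, then the functions $x\mapsto a\to f(x)$ and $x\mapsto a\wedge f(x)$ have least fixed points, and $\mu.(a\to f)=a\to\mu.f$ and $\mu.(a\wedge f)=a\wedge\mu.f$.
   Context: A monotone function $f:H\to H$ on a Heyting algebra is strong if $x\wedge f(y)\le f(x\wedge y)$ for all $x,y\in H$. For a monotone $g$, $\mu.g$ denotes the least prefixed point of $g$ (least $p$ with $g(p)\le p$), which when it exists is the least fixed point. *)

From mathcomp Require Import all_boot all_order.
Set Implicit Arguments. Unset Strict Implicit. Unset Printing Implicit Defensive.
Import Order.TTheory.
Local Open Scope order_scope.

Definition is_heyting_imp (d : Order.disp_t) (H : tbLatticeType d)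
  (imp : H -> H -> H) : Prop :=
  forall x y z : H, (z <= imp x y) = (z `&` x <= y).

Definition monotone (d : Order.disp_t) (H : porderType d) (f : H -> H) : Prop :=
  forall x y : H, x <= y -> f x <= f y.

Definition strong (d : Order.disp_t) (H : latticeType d) (f : H -> H) : Prop :=
  forall x y : H, x `&` f y <= f (x `&` y).

Definition is_mu (d : Order.disp_t) (H : porderType d) (g : H -> H) (p : H) : Prop :=
  g p <= p /\ forall q : H, g q <= q -> p <= q.

From mathcomp Require Import all_boot all_order.
Import Order.TTheory.
Local Open Scope order_scope.

(* Strength of f gives [a /\ f (a -> x) <= f (a /\ (a -> x)) <= f x], which
   makes [a -> mu.f] a prefixed point of [a -> f] and lets a prefixed point
   [q] of [a /\ f] yield the prefixed point [a -> q] of [f].  Minimality on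
   the other side comes from [mu.f <= f mu.f] and monotonicity. *)

Section HeytingImplication.

Context {d : Order.disp_t} {H : tbLatticeType d} {imp : H -> H -> H}.
Hypothesis Himp : is_heyting_imp imp.

Lemma imp_meetl (x y : H) : imp x y `&` x <= y.
Proof. by rewrite -Himp. Qed.

Lemma le_imp (x y : H) : y <= imp x y.
Proof. by rewrite Himp leIl. Qed.

Lemma imp_le2r (x y z : H) : y <= z -> imp x y <= imp x z.
Proof. by move=> le_yz; rewrite Himp (le_trans (imp_meetl x y)). Qed.

Lemma strong_meet_imp {f : H -> H} :
  monotone f -> strong f -> forall a x : H, a `&` f (imp a x) <= f x.
Proof.
move=> fmono fstrong a x; apply: le_trans (fstrong _ _) _.
by apply: fmono; rewrite meetC imp_meetl.
Qed.

End HeytingImplication.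

Lemma is_mu_le_fixed {d : Order.disp_t} {H : porderType d} {f : H -> H} {p : H} :
  monotone f -> is_mu f p -> p <= f p.
Proof. by move=> fmono [fp_le p_min]; apply/p_min/fmono. Qed.

Section LeastFixedPointTransfer.

Variables (d : Order.disp_t) (H : tbLatticeType d) (imp : H -> H -> H).
Hypothesis Himp : is_heyting_imp imp.
Variables (f : H -> H) (a muf : H).
Hypotheses (fmono : monotone f) (fstrong : strong f) (Hmuf : is_mu f muf).

Lemma is_mu_imp : is_mu (fun x => imp a (f x)) (imp a muf).
Proof.
have [fmu_le mu_min] := Hmuf.
split=> [|q /= le_q].
  rewrite Himp; apply: le_trans _ fmu_le.
  rewrite meetC; apply: le_trans _ (strong_meet_imp Himp fmono fstrong a muf).
  by rewrite lexI leIl /= meetC imp_meetl.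
have le_fq_q : f q <= q := le_trans (le_imp Himp a (f q)) le_q.
apply: le_trans _ le_q; apply: (imp_le2r Himp).
exact: le_trans (is_mu_le_fixed fmono Hmuf) (fmono _ _ (mu_min q le_fq_q)).
Qed.

Lemma is_mu_meet : is_mu (fun x => a `&` f x) (a `&` muf).
Proof.
have [fmu_le mu_min] := Hmuf.
split=> [|q /= le_q].
  by rewrite leI2 // (le_trans _ fmu_le) // fmono // leIr.
have muf_le : muf <= imp a q.
  apply: mu_min; rewrite Himp; apply: le_trans _ le_q.
  by rewrite lexI leIr /= meetC (strong_meet_imp Himp fmono fstrong).
by rewrite meetC -Himp.
Qed.

End LeastFixedPointTransfer.

Theorem mainTheorem6 (d : Order.disp_t) (H : tbLatticeType d)
  (imp : H -> H -> H) (Himp : is_heyting_imp imp)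
  (f : H -> H) (fmono : monotone f) (fstrong : strong f)
  (a : H) (muf : H) (Hmuf : is_mu f muf) :
  is_mu (fun x => imp a (f x)) (imp a muf) /\
  is_mu (fun x => a `&` f x) (a `&` muf).
Proof. by split; [exact: is_mu_imp | exact: is_mu_meet]. Qed.
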